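(* Let the standing assumptions (listed in the context) hold, and suppose there are $\bar k\ge0$ and $\mu>0$ such that $\mathcal{J}(x_k)-\mathcal{J}^*\le\frac{1}{\mu}\|\nabla\mathcal{J}(x_k)\|^2$ for all $k\ge\bar k$, where $\mathcal{J}^*:=\lim_{k\to\infty}\mathcal{J}(x_k)$. Then there exists $x^*\in\mathcal{X}$ such that 1) $\nabla\mathcal{J}(x^* )=0$ and $\mathcal{J}^*=\mathcal{J}(x^* )$; 2) the iterates $(x_k)$ converge r-linearly to $x^*$; 3) the gradients $(\nabla\mathcal{J}(x_k))$ converge r-linearly to zero; 4) the function values $(\mathcal{J}(x_k))$ converge q-linearly to $\mathcal{J}(x^* )$; specifically, $\mathcal{J}(x_{k+1})-\mathcal{J}(x^* )\le\left(1-\frac{\sigma\alpha_k\mu}{\|B_k\|}\right)[\mathcal{J}(x_k)-\mathcal{J}(x^* )]$ for all $k\ge\bar k$, and the supremum of the term in round brackets is strictly smaller than 1.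
   Context: Let $\mathcal{X}$ be a Hilbert space and $\mathcal{J}:\mathcal{X}\to\mathbb{R}$. Algorithm SLBFGS (structured inverse L-BFGS): inputs $x_0\in\mathcal{X}$, $\epsilon\geq0$, $\ell\in\mathbb{N}_0$, $c_0\geq 0$, $C_0\in[c_0,\infty]$, $c_s,c_1,c_2>0$; let $\tau_0>0$. For $k=0,1,2,\ldots$: let $m=\max\{0,k-\ell\}$; choose a symmetric positive semi-definite bounded linear operator $S_k$; set $B_k^{(0)}=\tau_k I+S_k$; let $B_k$ be obtained from $B_k^{(0)}$ and the currently stored pairs $(s_j,y_j)$, $m\le j\le k-1$, by successive L-BFGS updates $B\mapsto B+\frac{yy^T}{y^Ts}-\frac{Bss^TB}{s^TBs}$; set $d_k=-B_k^{-1}\nabla\mathcal{J}(x_k)$; compute a step length $\alpha_k>0$ by a line search; set $s_k=\alpha_kd_k$, $x_{k+1}=x_k+s_k$, $y_k=\nabla\mathcal{J}(x_{k+1})-\nabla\mathcal{J}(x_k)$; store $(s_k,y_k)$ only if $y_k^Ts_k>c_s\|s_k\|^2$; if $k\ge\ell$ remove $(s_m,y_m)$ from storage; stop with output $x_{k+1}$ if $\|\nabla\mathcal{J}(x_{k+1})\|\le\epsilon$; set $z_k=y_k-S_{k+1}s_k$, $\omega^l_{k+1}=\min\{c_0,c_1\|\nabla\mathcal{J}(x_{k+1})\|^{c_2}\}$, $\omega^u_{k+1}=\max\{C_0,(c_1\|\nabla\mathcal{J}(x_{k+1})\|^{c_2})^{-1}\}$; with $P(t)=\min\{\max\{t,\omega^l_{k+1}\},\omega^u_{k+1}\}$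 and $\rho=z_k^Ts_k$ let $\tau^s=P(\rho/\|s_k\|^2)$, $\tau^g=P(\|z_k\|/\|s_k\|)$, $\tau^z=P(\|z_k\|^2/\rho)$; if $\rho>0$ choose $\tau_{k+1}\in[\tau^s,\tau^z]$, else choose $\tau_{k+1}\in[\tau^s,\tau^g]$. Line searches: Armijo with backtracking means, for fixed $\beta,\sigma\in(0,1)$, $\alpha_k$ is the largest number in $\{1,\beta,\beta^2,\ldots\}$ with $\mathcal{J}(x_{k+1})\le\mathcal{J}(x_k)+\alpha_k\sigma\nabla\mathcal{J}(x_k)^Td_k$; the Wolfe–Powell conditions are this Armijo inequality together with $\nabla\mathcal{J}(x_{k+1})^Td_k\ge\eta\nabla\mathcal{J}(x_k)^Td_k$ for fixed $\eta\in(\sigma,1)$. Let $\Omega=\{x:\mathcal{J}(x)\le\mathcal{J}(x_0)\}$ and $\Omega_\delta=\{x:\exists\hat x\in\Omega,\ \|x-\hat x\|<\delta\}$. Standing assumptions: 1) $\mathcal{J}$ is continuously differentiable and bounded below; 2) $\nabla\mathcal{J}$ is Lipschitz continuous on $\Omega$ with constant $L>0$; 3) $(\|S_k\|)$ is bounded; 4) the step sizes consistently satisfy the Armijo condition computed by backtracking, or consistently satisfy the Wolfe–Powell conditions; in the Armijo case there is $\delta>0$ such that $\mathcal{J}$ or $\nabla\mathcal{J}$ is uniformly continuous on $\Omega_\delta$; 5) $c_0=0$ is only chosen if then $\sup_k\|(B_k^{(0)})^{-1}\|<\infty$; 6) $C_0=\infty$ is only chosen if either the interval $[\tau^s,\tau^z]$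 is replaced by $[\tau^s,\tau^g]$, or $\mathcal{J}$ is twice continuously differentiable, $\int_0^1\nabla^2\mathcal{J}(x_k+ts_k)\,dt-S_{k+1}$ is symmetric positive semi-definite for all $k$ with bounded norms; 7) the algorithm is run with $\epsilon=0$ and generates an infinite sequence $(x_k)$; 8) $(\|B_k\|)$ and $(\|B_k^{-1}\|)$ are bounded; 9) if Armijo backtracking is used, there is $\delta>0$ such that $\mathcal{J}$ is uniformly continuous on $\Omega_\delta$ or $\nabla\mathcal{J}$ is Lipschitz continuous on $\Omega_\delta$. *)

From HB Require Import structures.
From mathcomp Require Import all_boot all_order all_algebra.
From mathcomp Require Import all_classical all_reals all_analysis.
Set Implicit Arguments.
Unset Strict Implicit.
Unset Printing Implicit Defensive.
Import Order.TTheory GRing.Theory Num.Theory.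
Import numFieldNormedType.Exports.
Local Open Scope classical_set_scope.
Local Open Scope ring_scope.

Section SLBFGS.
Variables (R : realType) (X : completeNormedModType R).

Definition inner_product (ip : X -> X -> R) : Prop :=
  [/\ forall u v, ip u v = ip v u,
      forall a u v w, ip (a *: u + v) w = a * ip u w + ip v w
    & forall u, ip u u = `|u| ^+ 2].

Definition C1_with_gradient (ip : X -> X -> R) (J : X -> R) (g : X -> X) : Prop :=
  (forall x, differentiable J x /\ forall h, ('d J x : X -> R) h = ip (g x) h)
  /\ continuous g.

(** [J] twice continuously differentiable: the gradient [g] is Frechet
    differentiable and its derivative (the Hessian) is continuous in the
    operator norm. *)
Definition C2_gradient (g : X -> X) : Prop :=
  (forall x, differentiable g x) /\
  forall x e, 0 < e -> exists2 d, 0 < d &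
    forall y, `|y - x| < d -> forall v,
      `|('d g y : X -> X) v - ('d g x : X -> X) v| <= e * `|v|.

Definition opnorm (A : X -> X) : R :=
  sup [set r | exists2 v : X, `|v| <= 1 & r = `|A v|].

Definition unif_bounded_ops (A : nat -> X -> X) : Prop :=
  exists M : R, forall k v, `|A k v| <= M * `|v|.

Definition unif_bounded_inverses (A : nat -> X -> X) : Prop :=
  exists M : R, forall k,
    (forall w, exists v, A k v = w) /\ (forall v, `|v| <= M * `|A k v|).

Definition symmetric_psd (ip : X -> X -> R) (A : X -> X) : Prop :=
  (forall u v, ip (A u) v = ip u (A v)) /\ (forall u, 0 <= ip (A u) u).

Definition grad_lipschitz_on (A : set X) (f : X -> X) (L : R) : Prop :=
  forall x y, A x -> A y -> `|f x - f y| <= L * `|x - y|.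

Definition unif_continuous_on {Y : normedModType R} (A : set X) (f : X -> Y) : Prop :=
  forall e, 0 < e -> exists2 d, 0 < d &
    forall x y, A x -> A y -> `|x - y| < d -> `|f x - f y| < e.

Definition levelset (J : X -> R) (x0 : X) : set X := [set x | J x <= J x0].
Definition levelset_nbhd (J : X -> R) (x0 : X) (delta : R) : set X :=
  [set x | exists2 xh, levelset J x0 xh & `|x - xh| < delta].

(** the L-BFGS update  B |-> B + y y^T/(y^T s) - B s s^T B/(s^T B s) *)
Definition bfgs_update (ip : X -> X -> R) (B : X -> X) (sy : X * X) : X -> X :=
  let: (s, y) := sy in
  fun v => B v + (ip y v / ip y s) *: y - (ip s (B v) / ip s (B s)) *: B s.

Definition armijo (ip : X -> X -> R) (J : X -> R) (g : X -> X)
    (sigma : R) (x d : X) (a : R) : Prop :=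
  J (x + a *: d) <= J x + a * sigma * ip (g x) d.

Definition wolfe_powell (ip : X -> X -> R) (J : X -> R) (g : X -> X)
    (sigma eta : R) (x d : X) (a : R) : Prop :=
  armijo ip J g sigma x d a /\ eta * ip (g x) d <= ip (g (x + a *: d)) d.

Definition armijo_backtracking (ip : X -> X -> R) (J : X -> R) (g : X -> X)
    (beta sigma : R) (x d : X) (a : R) : Prop :=
  exists i : nat, a = beta ^+ i /\ armijo ip J g sigma x d a /\
    forall i' : nat, (i' < i)%N -> ~ armijo ip J g sigma x d (beta ^+ i').

(** projection P(t) = min{max{t, wl}, wu}, with [wu = None] meaning +oo *)
Definition clamp (wl : R) (wu : option R) (t : R) : R :=
  match wu with
  | Some u => Num.min (Num.max t wl) u
  | None => Num.max t wl
  end.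

(** An infinite run (epsilon = 0, never stopping) of Algorithm SLBFGS.
    - [C0 = None] encodes C_0 = +oo;
    - [armijo_ls = true]: Armijo backtracking with parameters beta, sigma;
      [armijo_ls = false]: Wolfe--Powell with parameters sigma, eta;
    - [tau_g_variant = true]: the interval [tau^s, tau^z] is replaced by
      [tau^s, tau^g] (the variant mentioned in standing assumption 6);
    - [S k] are the chosen operators S_k, [tau k] the scalings tau_k,
      [alpha k] the step lengths, [B k] the operators B_k, [d k] the
      directions d_k. *)
Definition slbfgs_run (ip : X -> X -> R) (J : X -> R) (g : X -> X)
    (ell : nat) (c0 : R) (C0 : option R) (cs c1 c2 : R)
    (armijo_ls : bool) (beta sigma eta : R) (tau_g_variant : bool)
    (x : nat -> X) (S : nat -> {linear X -> X}) (tau : nat -> R)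
    (alpha : nat -> R) (B : nat -> X -> X) (d : nat -> X) : Prop :=
  let s k := alpha k *: d k in
  let y k := g (x k.+1) - g (x k) in
  let stored j := cs * `|s j| ^+ 2 < ip (y j) (s j) in
  ((0 <= c0 /\ (if C0 is Some C then c0 <= C else True)) /\
   (0 < cs /\ 0 < c1 /\ 0 < c2) /\ 0 < tau 0) /\
  (if armijo_ls then 0 < beta < 1 /\ 0 < sigma < 1
   else 0 < sigma < eta /\ eta < 1) /\
  (forall k, symmetric_psd ip (S k)) /\
  (* B_k: successive updates of tau_k I + S_k with the stored pairs
     (s_j, y_j), m <= j <= k-1, m = max(0, k - ell), in increasing j *)
  (forall k, let m := (k - ell)%N in
     B k = foldl (bfgs_update ip) (fun v => tau k *: v + S k v)
             [seq (s j, y j) | j <- iota m (k - m) & stored j]) /\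
  (forall k, B k (d k) = - g (x k)) /\
  (forall k, 0 < alpha k /\
     (if armijo_ls then armijo_backtracking ip J g beta sigma (x k) (d k) (alpha k)
      else wolfe_powell ip J g sigma eta (x k) (d k) (alpha k))) /\
  (forall k, x k.+1 = x k + s k) /\
  (* epsilon = 0 and the algorithm never stops *)
  (forall k, g (x k.+1) != 0) /\
  (forall k,
     let z := y k - S k.+1 (s k) in
     let w := c1 * powR `|g (x k.+1)| c2 in
     let wl := Num.min c0 w in
     let wu := if C0 is Some C then Some (Num.max C w^-1) else None in
     let P := clamp wl wu in
     let rho := ip z (s k) in
     let taus := P (rho / `|s k| ^+ 2) in
     let taug := P (`|z| / `|s k|) in
     let tauz := P (`|z| ^+ 2 / rho) in
     if (0 < rho) && ~~ tau_g_variant then taus <= tau k.+1 <= tauz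
     else taus <= tau k.+1 <= taug).

Definition rlinear_conv {Y : normedModType R} (u : nat -> Y) (l : Y) : Prop :=
  exists C q : R, [/\ 0 <= C, 0 <= q, q < 1 & forall k, `|u k - l| <= C * q ^+ k].

Definition qlinear_conv {Y : normedModType R} (u : nat -> Y) (l : Y) : Prop :=
  exists q : R, 0 <= q /\ q < 1 /\
    exists K : nat, forall k, (K <= k)%N -> `|u k.+1 - l| <= q * `|u k - l|.

(** The operator
    A_k := int_0^1 Hess J(x_k + t s_k) dt - S_{k+1} is described through its
    bilinear form <A_k v, w> (weak integral of the Hessian [d g]). *)
Definition avg_hessian_cond (ip : X -> X -> R) (g : X -> X)
    (S : nat -> {linear X -> X}) (x : nat -> X) (alpha : nat -> R)
    (d : nat -> X) : Prop :=
  exists M : R, forall k (v w : X),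
    let s := alpha k *: d k in
    let A (v w : X) :=
      (\int[@lebesgue_measure R]_(t in [set t : R | 0 <= t <= 1])
          ip (('d g (x k + t *: s) : X -> X) v) w) - ip (S k.+1 v) w in
    [/\ A v w = A w v, 0 <= A v v & `|A v w| <= M * `|v| * `|w|].

End SLBFGS.

From HB Require Import structures.
From mathcomp Require Import all_boot all_order all_algebra.
From mathcomp Require Import all_classical all_reals all_analysis.
From mathcomp Require Import ring lra.
Set Implicit Arguments.
Unset Strict Implicit.
Unset Printing Implicit Defensive.
Import Order.TTheory GRing.Theory Num.Theory.
Import numFieldNormedType.Exports.
Local Open Scope classical_set_scope.
Local Open Scope ring_scope.

(* Every B_k is symmetric positive semidefinite (tau_k I + S_k is, and BFGS updates with
   y^T s > 0 preserve this), so B_k d_k = -g_k gives |g_k|^2 <= |B_k| <g_k, -d_k>.  Because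
   g is Lipschitz on the level set, both line searches then produce step lengths bounded
   away from 0, and the Armijo condition combined with the error bound yields
   J(x_{k+1}) - Jstar <= (1 - sigma alpha_k mu / |B_k|) (J(x_k) - Jstar) with a uniform factor
   q < 1.  The gaps decay like q^k; |g_k|^2 is bounded by a multiple of the gap, and the
   steps by a multiple of |g_k|, so both decay like sqrt(q)^k.  Hence (x_k) is Cauchy, and
   its limit is stationary with value Jstar. *)

Section SymmetricBilinearForm.
Variables (R : realFieldType) (V : lmodType R) (b : V -> V -> R).
Hypothesis b_sym : forall u v, b u v = b v u.
Hypothesis b_linl : forall a u v w, b (a *: u + v) w = a * b u w + b v w.

Lemma bilin0l w : b 0 w = 0.
Proof. by have := b_linl 1 0 0 w; rewrite scaler0 addr0 mul1r; lra. Qed.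

Lemma bilinZl a u w : b (a *: u) w = a * b u w.
Proof. by have := b_linl a u 0 w; rewrite addr0 bilin0l addr0. Qed.

Lemma bilinDl u v w : b (u + v) w = b u w + b v w.
Proof. by have := b_linl 1 u v w; rewrite scale1r mul1r. Qed.

Lemma bilinZr a u w : b w (a *: u) = a * b w u.
Proof. by rewrite b_sym bilinZl b_sym. Qed.

Lemma bilinDr u v w : b w (u + v) = b w u + b w v.
Proof. by rewrite b_sym bilinDl !(b_sym w). Qed.

Hypothesis b_psd : forall u, 0 <= b u u.

Lemma bilin_CS u v : b u v ^+ 2 <= b u u * b v v.
Proof.
have quad t : 0 <= b v v * t ^+ 2 + 2 * b u v * t + b u u.
  have := b_psd (t *: v + u).
  by rewrite bilinDl !bilinDr !bilinZl !bilinZr (b_sym v u); lra.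
have [vv0|vv_gt0] := eqVneq (b v v) 0.
  have [->|uv_neq0] := eqVneq (b u v) 0; first by rewrite expr0n /= vv0 mulr0.
  have := quad (- (b u u + 1) / (2 * b u v)).
  have -> : 2 * b u v * (- (b u u + 1) / (2 * b u v)) = - (b u u + 1).
    by field; rewrite ?mulf_neq0 ?pnatr_eq0 //; exact/andP.
  rewrite vv0 mul0r add0r; lra.
have {}vv_gt0 : 0 < b v v by rewrite lt_def vv_gt0 b_psd.
have := quad (- b u v / b v v).
have -> : b v v * (- b u v / b v v) ^+ 2 + 2 * b u v * (- b u v / b v v) + b u u
   = (b u u * b v v - b u v ^+ 2) / b v v by field; rewrite gt_eqF.
by rewrite pmulr_lge0 ?invr_gt0 // subr_ge0.
Qed.

End SymmetricBilinearForm.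

Section InnerProduct.
Variables (R : realType) (X : completeNormedModType R) (ip : X -> X -> R).
Hypothesis Hip : inner_product ip.

Lemma ipC u v : ip u v = ip v u. Proof. by case: Hip. Qed.
Let ip_linl a u v w : ip (a *: u + v) w = a * ip u w + ip v w.
Proof. by case: Hip. Qed.
Lemma ipxx u : ip u u = `|u| ^+ 2. Proof. by case: Hip. Qed.

Let ip_ge0 u : 0 <= ip u u. Proof. by rewrite ipxx sqr_ge0. Qed.

Lemma ipDl u v w : ip (u + v) w = ip u w + ip v w. Proof. exact: (bilinDl ip_linl). Qed.
Lemma ipDr u v w : ip w (u + v) = ip w u + ip w v. Proof. exact: (bilinDr ipC ip_linl). Qed.
Lemma ipZl a u w : ip (a *: u) w = a * ip u w. Proof. exact: (bilinZl ip_linl). Qed.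
Lemma ipZr a u w : ip w (a *: u) = a * ip w u. Proof. exact: (bilinZr ipC ip_linl). Qed.
Lemma ipNl u w : ip (- u) w = - ip u w.
Proof. by rewrite -scaleN1r ipZl mulN1r. Qed.
Lemma ipNr u w : ip w (- u) = - ip w u.
Proof. by rewrite -scaleN1r ipZr mulN1r. Qed.
Lemma ipBl u v w : ip (u - v) w = ip u w - ip v w.
Proof. by rewrite ipDl ipNl. Qed.

Lemma ip_CS u v : `|ip u v| <= `|u| * `|v|.
Proof.
have := bilin_CS ipC ip_linl ip_ge0 u v.
rewrite !ipxx => CS.
have uv_ge0 : 0 <= `|u| * `|v| by rewrite mulr_ge0.
by rewrite ler_norml; apply/andP; split; nra.
Qed.

Lemma symmetric_psd_CS (B : X -> X) u v : linear B -> symmetric_psd ip B ->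
  ip (B u) v ^+ 2 <= ip (B u) u * ip (B v) v.
Proof.
move=> linB [symB psdB]; apply: (bilin_CS (b := fun u v => ip (B u) v)) => //.
- by move=> u1 v1; rewrite symB ipC.
- by move=> a u1 v1 w; rewrite linB ipDl ipZl.
Qed.

(* With [w := B u]: [|w|^4 = <B u, w>^2 <= <B u, u> <B w, w> <= <B u, u> N |w|^2]. *)
Lemma sqr_norm_le_ip (B : X -> X) (N : R) u :
  linear B -> symmetric_psd ip B -> 0 <= N -> (forall w, `|B w| <= N * `|w|) ->
  `|B u| ^+ 2 <= N * ip (B u) u.
Proof.
move=> linB symB N_ge0 BN; have P_ge0 := symB.2 u.
set w := B u; set P := ip w u in P_ge0 *.
have Bww : ip (B w) w <= N * `|w| ^+ 2.
  apply: le_trans (ler_norm _) _; apply: le_trans (ip_CS _ _) _.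
  by rewrite expr2 mulrA ler_wpM2r ?BN.
have CS : (`|w| ^+ 2) ^+ 2 <= P * (N * `|w| ^+ 2).
  rewrite -{1}ipxx; apply: le_trans (symmetric_psd_CS u w linB symB) _.
  by rewrite ler_wpM2l.
have [w0|w_neq0] := eqVneq `|w| 0; first by rewrite w0 expr0n /= mulr_ge0.
have : 0 < `|w| ^+ 2 by apply: exprn_gt0; rewrite lt_def w_neq0 /=.
nra.
Qed.

End InnerProduct.

Section LinearFunction.
Variables (R : pzRingType) (U V : lmodType R) (f : U -> V).
Hypothesis linf : linear f.

Lemma linear_fun0 : f 0 = 0.
Proof. by have := zmod_morphism_linear linf 0 0; rewrite !subrr. Qed.

Lemma linear_funZ a u : f (a *: u) = a *: f u.
Proof. by rewrite -[a *: u]addr0 linf linear_fun0 addr0. Qed.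

Lemma linear_funN u : f (- u) = - f u.
Proof. by rewrite -scaleN1r linear_funZ scaleN1r. Qed.

End LinearFunction.

Section OperatorNorm.
Variables (R : realType) (X : completeNormedModType R) (B : X -> X) (M : R).
Hypothesis B_bounded : forall v, `|B v| <= M * `|v|.

Let unit_image := [set r | exists2 v : X, `|v| <= 1 & r = `|B v|].

Let unit_image_ubound : ubound unit_image `|M|.
Proof.
move=> _ [v v1 ->]; apply: le_trans (B_bounded v) _.
apply: le_trans (ler_wpM2r (normr_ge0 v) (ler_norm M)) _.
by rewrite -[leRHS]mulr1 ler_wpM2l.
Qed.

Let unit_image_neq0 : unit_image !=set0.
Proof. by exists `|B 0|, 0; rewrite ?normr0. Qed.

Lemma opnorm_le : 0 <= M -> opnorm B <= M.
Proof.
by move=> M_ge0; rewrite -(ger0_norm M_ge0); exact: ge_sup unit_image_neq0 unit_image_ubound.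
Qed.

Lemma opnorm_ub u : linear B -> `|B u| <= opnorm B * `|u|.
Proof.
move=> linB; have [->|u_neq0] := eqVneq u 0.
  by rewrite linear_fun0 // !normr0 mulr0.
have u_gt0 : 0 < `|u| by rewrite normr_gt0.
rewrite mulrC -ler_pdivrMl // -[`|u|^-1]ger0_norm ?invr_ge0 //.
rewrite -normrZ -linear_funZ //.
apply: (ub_le_sup (ex_intro _ _ unit_image_ubound)).
by exists (`|u|^-1 *: u); rewrite // normrZ ger0_norm ?invr_ge0 // mulVf ?gt_eqF.
Qed.

End OperatorNorm.

Lemma opnorm_unif_bounded (R : realType) (X : completeNormedModType R)
    (A : nat -> X -> X) :
  unif_bounded_ops A -> exists M, forall k, opnorm (A k) <= M.
Proof.
move=> [M A_M]; exists `|M| => k; apply: opnorm_le => // v.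
by apply: le_trans (A_M k v) _; rewrite ler_wpM2r // ler_norm.
Qed.

Section BFGSUpdate.
Variables (R : realType) (X : completeNormedModType R) (ip : X -> X -> R).
Hypothesis Hip : inner_product ip.

Lemma bfgs_update_linear B s y : linear B -> linear (bfgs_update ip B (s, y)).
Proof.
move=> linB a u v /=; rewrite linB !(ipDr Hip) !(ipZr Hip).
rewrite !mulrDl !scalerDl !scalerDr !scalerN !scalerA !mulrA opprD.
by rewrite [a *: B u + _ + _]addrACA [_ + (- _ - _)]addrACA.
Qed.

Lemma bfgs_update_symmetric_psd B s y : linear B -> symmetric_psd ip B ->
  0 <= ip y s -> symmetric_psd ip (bfgs_update ip B (s, y)).
Proof.
move=> linB [symB psdB] ys; split=> [u v|u] /=.
  rewrite !(ipDl Hip) !(ipDr Hip) (ipNl Hip) (ipNr Hip) !(ipZl Hip) !(ipZr Hip).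
  by rewrite symB (ipC Hip u y) (symB s v) -(symB u s) (ipC Hip (B u) s); ring.
rewrite !(ipDl Hip) (ipNl Hip) !(ipZl Hip) -(symB s u) -(symB s s) (ipC Hip y u).
have CS := symmetric_psd_CS Hip s u linB (conj symB psdB).
have ss_ge0 := psdB s; have uu_ge0 := psdB u.
have y_term : 0 <= ip u y / ip y s * ip u y.
  by rewrite mulrAC -expr2 divr_ge0 // sqr_ge0.
have s_term : ip (B s) u / ip (B s) s * ip (B s) u <= ip (B u) u.
  rewrite mulrAC -expr2; have [->|ss_neq0] := eqVneq (ip (B s) s) 0.
    by rewrite invr0 mulr0.
  by rewrite ler_pdivrMr ?lt_def ?ss_neq0 // mulrC.
lra.
Qed.

Lemma foldl_bfgs_update_symmetric_psd (l : seq (X * X)) B :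
  linear B -> symmetric_psd ip B -> all (fun p => 0 <= ip p.2 p.1) l ->
  linear (foldl (bfgs_update ip) B l) /\ symmetric_psd ip (foldl (bfgs_update ip) B l).
Proof.
elim: l B => [|[s y] l IH] B linB symB //= /andP[ys l_ok].
by apply: IH => //; [exact: bfgs_update_linear | exact: bfgs_update_symmetric_psd].
Qed.

End BFGSUpdate.

Lemma derive1_ge0_at_left_min (R : realType) (f : R -> R) (c b : R) : c < b ->
  derivable f c 1 -> (forall h, c < h < b -> f c <= f h) -> 0 <= 'D_1 f c.
Proof.
move=> cb df fmin.
rewrite ['D_1 f c]cvg_at_rightE; last exact: df.
apply: limr_ge.
  rewrite -(cvg_at_rightE (fun h : R => h^-1 *: ((f \o shift c) _ - f c))) //.
  apply: cvg_trans df; apply: cvg_app.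
  move=> A [e egt0 Ae]; exists e => // y ye ygt0; apply: Ae => //.
  exact/lt0r_neq0.
near=> h; apply: mulr_ge0.
  by rewrite invr_ge0; apply: ltW; near: h; exists 1 => /=.
rewrite subr_ge0 [_%:A]mulr1; apply: fmin; near: h.
exists (b - c); first by rewrite /= subr_gt0.
move=> h; rewrite /= distrC subr0 => hb h0.
apply/andP; split; first by rewrite ltrDr.
by rewrite -ltrBrDr; apply: le_lt_trans hb; apply: ler_norm.
Unshelve. all: by end_near.
Qed.

Section LineSearch.
Variables (R : realType) (X : completeNormedModType R) (ip : X -> X -> R).
Hypothesis Hip : inner_product ip.
Variables (J : X -> R) (g : X -> X).
Hypothesis J_grad : forall p, differentiable J p /\ forall h, ('d J p : X -> R) h = ip (g p) h.

Lemma is_derive_along_line (x d : X) (s : R) :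
  is_derive s 1 (fun r : R => J (x + r *: d)) (ip (g (x + s *: d)) d).
Proof.
set p := x + s *: d; have [dJ gradJ] := J_grad p.
have E : (fun h : R => h^-1 *: (((fun r : R => J (x + r *: d)) \o shift s) (h *: 1)
            - J (x + s *: d)))
       = (fun h : R => h^-1 *: ((J \o shift p) (h *: d) - J p)).
  apply: funext => h /=; congr (_ *: (J _ - _)).
  by rewrite /p [_%:A]mulr1 scalerDl addrCA addrC.
apply: DeriveDef; first by rewrite /derivable E; exact: diff_derivable.
by rewrite /derive E -/(derive J p d) deriveE.
Qed.

(* A minimiser of [J (x + r d) - sg c r] on [0, t] is interior, hence critical; unlike
   a mean-value point it stays in the level set of [x], where [g] is Lipschitz. *)
Lemma armijo_failure_point (x d : X) (t sg : R) : 0 < t -> 0 < sg < 1 ->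
  ip (g x) d < 0 -> ~ armijo ip J g sg x d t ->
  exists th, [/\ 0 < th, th < t, ip (g (x + th *: d)) d = sg * ip (g x) d
     & J (x + th *: d) <= J x].
Proof.
move=> t_gt0 /andP[sg_gt0 sg_lt1] c_lt0 /negP; rewrite -ltNge => fail.
set c := ip (g x) d in c_lt0 fail *; set k := sg * c.
pose phi : R -> R := (fun r : R => J (x + r *: d)) - k \*: (@id R).
have phiE r : phi r = J (x + r *: d) - k * r by [].
have dphi (s : R) : is_derive s 1 phi (ip (g (x + s *: d)) d - k *: 1).
  exact: is_deriveB (is_derive_along_line _ _ _) _.
have dv (s : R) : derivable phi s 1 by case: (dphi s).
have Dv (s : R) : 'D_1 phi s = ip (g (x + s *: d)) d - k.
  by case: (dphi s) => _ ->; rewrite [_ *: 1]mulr1.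
have cont : {within `[0, t], continuous phi}.
  by apply: derivable_within_continuous => s _; exact: dv.
have [m m0t mmin] := EVT_min (ltW t_gt0) cont.
have phi0 : phi 0 = J x by rewrite phiE scale0r addr0 mulr0 subr0.
have phit : J x < phi t by rewrite phiE /k; lra.
have mle : phi m <= J x by rewrite -phi0; apply: mmin; rewrite in_itv /= lexx ltW.
move: m0t; rewrite in_itv /= => /andP[m_ge0 m_le_t].
have m_neq_t : m != t by apply/eqP => mt; move: mle; rewrite mt; lra.
have m_neq0 : m != 0.
  apply/eqP => m0.
  have : 0 <= 'D_1 phi 0.
    apply: (derive1_ge0_at_left_min t_gt0 (dv 0)) => h /andP[h0 ht].
    by rewrite -m0; apply: mmin; rewrite in_itv /= !ltW.
  rewrite Dv scale0r addr0 /k -/c.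
  have : 0 < (1 - sg) * - c by rewrite mulr_gt0 // ?subr_gt0 // oppr_gt0.
  lra.
have m_gt0 : 0 < m by rewrite lt_def m_neq0 m_ge0.
have m_lt_t : m < t by rewrite lt_def eq_sym m_neq_t m_le_t.
have : is_derive m 1 phi 0.
  apply: (derive1_at_min (ltW t_gt0) (fun s _ => dv s)) => [|s].
    by rewrite in_itv /= m_gt0 m_lt_t.
  by rewrite in_itv /= => /andP[? ?]; apply: mmin; rewrite in_itv /= !ltW.
case=> _; rewrite Dv => Dm.
exists m; split => //; first by move: Dm; rewrite /k /c; lra.
have : k * m < 0 by rewrite /k pmulr_llt0 // pmulr_rlt0.
by move: mle; rewrite phiE; lra.
Qed.

Variables (A : set X) (L : R).
Hypotheses (L_ge0 : 0 <= L) (g_lip : grad_lipschitz_on A g L).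

Lemma step_lb_of_curvature (x d : X) (t eta K : R) : A x -> A (x + t *: d) ->
  0 <= t -> ip (g x) d < 0 -> `|d| ^+ 2 <= K * - ip (g x) d ->
  eta * ip (g x) d <= ip (g (x + t *: d)) d -> 1 - eta <= L * K * t.
Proof.
move=> Ax Axt t_ge0 c_lt0 dK curv.
have lip : ip (g (x + t *: d)) d - ip (g x) d <= L * t * `|d| ^+ 2.
  rewrite -(ipBl Hip); apply: le_trans (ler_norm _) _.
  apply: le_trans (ip_CS Hip _ _) _; rewrite expr2 mulrA ler_wpM2r //.
  by apply: le_trans (g_lip Axt Ax) _; rewrite addrAC subrr add0r normrZ ger0_norm ?mulrA.
have LtK : L * t * `|d| ^+ 2 <= L * t * (K * - ip (g x) d).
  by rewrite ler_wpM2l ?mulr_ge0.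
rewrite -(ler_pM2r (_ : 0 < - ip (g x) d)) ?oppr_gt0 //; lra.
Qed.

Lemma wolfe_powell_step_lb (x d : X) (a sigma eta K : R) :
  wolfe_powell ip J g sigma eta x d a -> 0 <= a -> A x -> A (x + a *: d) ->
  ip (g x) d < 0 -> `|d| ^+ 2 <= K * - ip (g x) d -> 1 - eta <= L * K * a.
Proof. by move=> [_ curv] *; exact: step_lb_of_curvature curv. Qed.

Lemma armijo_backtracking_step_lb (x d : X) (a beta sigma K : R) :
  0 < beta -> 0 < sigma < 1 -> armijo_backtracking ip J g beta sigma x d a ->
  (forall y, J y <= J x -> A y) -> ip (g x) d < 0 ->
  `|d| ^+ 2 <= K * - ip (g x) d -> a = 1 \/ beta * (1 - sigma) <= L * K * a.
Proof.
move=> beta_gt0 sigma01 [[|i] [-> [_ first_ok]]] Omega c_lt0 dK; [by left | right].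
have [th [th_gt0 th_lt curv Jth]] :=
  armijo_failure_point (exprn_gt0 i beta_gt0) sigma01 c_lt0 (first_ok i (ltnSn i)).
have lb : 1 - sigma <= L * K * th.
  apply: step_lb_of_curvature (Omega _ (lexx _)) (Omega _ Jth) (ltW th_gt0) c_lt0 dK _.
  by rewrite curv.
have K_ge0 : 0 <= K.
  by rewrite -(pmulr_lge0 _ (_ : 0 < - ip (g x) d)) ?oppr_gt0 // (le_trans _ dK).
rewrite exprS mulrCA ler_pM2l //; apply: le_trans lb _.
by rewrite ler_wpM2l ?mulr_ge0 // ltW.
Qed.

End LineSearch.

Section GeometricBounds.
Variable R : realType.

Lemma geometric_bound_from (u : nat -> R) (r C : R) (K : nat) : 0 < r ->
  (forall k, (K <= k)%N -> u k <= C * r ^+ k) ->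
  exists2 C', 0 <= C' & forall k, u k <= C' * r ^+ k.
Proof.
move=> r_gt0; elim: K C => [|K IH] C ub.
  exists `|C| => // k; apply: le_trans (ub k isT) _.
  by rewrite ler_pM2r ?exprn_gt0 // ler_norm.
have rK_gt0 : 0 < r ^+ K by rewrite exprn_gt0.
apply: (IH (`|C| + `|u K| / r ^+ K)) => k; rewrite leq_eqVlt => /orP[/eqP <-|Kk].
  rewrite mulrDl divfK ?gt_eqF //; apply: le_trans (ler_norm _) _.
  by rewrite lerDr mulr_ge0 // ltW.
apply: le_trans (ub k Kk) _; rewrite ler_pM2r ?exprn_gt0 //.
by apply: le_trans (ler_norm _) _; rewrite lerDl divr_ge0 // ltW.
Qed.

Lemma geometric_of_contraction (e : nat -> R) (q : R) (K : nat) : 0 < q ->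
  (forall k, (K <= k)%N -> e k.+1 <= q * e k) ->
  forall k, (K <= k)%N -> e k <= e K / q ^+ K * q ^+ k.
Proof.
move=> q_gt0 contr; elim=> [|k IH]; first by rewrite leqn0 => /eqP ->; rewrite divfK ?expf_neq0 ?gt_eqF.
rewrite leq_eqVlt => /orP[/eqP <-|Kk]; first by rewrite divfK ?expf_neq0 ?gt_eqF.
apply: le_trans (contr k Kk) _.
by rewrite exprS mulrCA ler_pM2l // IH.
Qed.

Lemma norm_le_sqrt_mul (a b A : R) : a ^+ 2 <= A * b ^+ 2 -> `|a| <= Num.sqrt A * `|b|.
Proof.
move=> le_ab; rewrite -sqrtr_sqr -[`|b|]sqrtr_sqr mulrC -sqrtrM ?sqr_ge0 //.
by apply: ler_wsqrtr; rewrite mulrC.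
Qed.

End GeometricBounds.

Section RLinearConvergence.
Variables (R : realType) (X : completeNormedModType R).

Lemma rlinear_conv_cvg (u : nat -> X) (l : X) : rlinear_conv u l -> u @ \oo --> l.
Proof.
move=> [C [q [C_ge0 q_ge0 q_lt1 ub]]]; apply/cvgrPdist_le => e e_gt0.
have /cvgrPdist_le /(_ e e_gt0) : geometric C q @ \oo --> 0.
  by apply: cvg_geometric; rewrite ger0_norm.
apply: filterS => k; rewrite sub0r normrN distrC => /(le_trans (ler_norm _)).
exact: le_trans (ub k).
Qed.

Lemma rlinear_conv_of_geometric_steps (u : nat -> X) (C r : R) : 0 < r < 1 ->
  (forall k, `|u k.+1 - u k| <= C * r ^+ k) -> exists l, rlinear_conv u l.
Proof.
move=> /andP[r_gt0 r_lt1] steps.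
have C_ge0 : 0 <= C by have := steps 0%N; rewrite expr0 mulr1; apply: le_trans.
have r_lt1' : `|r| < 1 by rewrite ger0_norm ?ltW.
have norm_tail k n : \sum_(k <= i < k + n) `|u i.+1 - u i| <= C * (r ^+ k / (1 - r)).
  apply: le_trans (ler_sum _ (fun i _ => steps i)) _.
  rewrite -mulr_sumr geometric_partial_tail ler_wpM2l //.
  by apply: geometric_le_lim; rewrite ?exprn_ge0 ?ltW.
have tail k n : `|u (k + n)%N - u k| <= C * (r ^+ k / (1 - r)).
  rewrite -telescope_sumr ?leq_addr //.
  exact: le_trans (ler_norm_sum _ _ _) (norm_tail k n).
have : cvgn (series (telescope u)).
  apply: normed_cvg; apply: nondecreasing_is_cvgn.
    by apply: nondecreasing_series => n _; rewrite normr_ge0.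
  exists (C * (r ^+ 0 / (1 - r))) => _ [n _ <-]; rewrite /series /= -[n]add0n.
  exact: norm_tail.
move=> /cvg_ex[l0 ser_l0]; exists (u 0%N + l0).
have u_cvg : u @ \oo --> u 0%N + l0.
  rewrite {1}[u](funext (eq_sum_telescope u)); exact: cvgD (cvg_cst _) ser_l0.
exists (C / (1 - r)), r; split => [||//|k].
- by rewrite divr_ge0 // subr_ge0 ltW.
- exact: ltW.
rewrite distrC mulrAC -mulrA; apply: (cvgr_to_le (cvg_norm (cvgB u_cvg (cvg_cst (u k))))).
near=> n; have /subnKC <- : (k <= n)%N by near: n; exists k.
exact: tail.
Unshelve. all: by end_near.
Qed.

End RLinearConvergence.

Section Descent.
Variables (R : realType) (X : completeNormedModType R) (ip : X -> X -> R).
Variables (J : X -> R) (g : X -> X) (x d : nat -> X) (alpha N : nat -> R) (sigma : R).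
Hypotheses (sigma_gt0 : 0 < sigma) (alpha_gt0 : forall k, 0 < alpha k).
Hypothesis N_gt0 : forall k, 0 < N k.
Hypothesis x_step : forall k, x k.+1 = x k + alpha k *: d k.
Hypothesis armijo_step : forall k, armijo ip J g sigma (x k) (d k) (alpha k).
Hypothesis grad_sqr_le : forall k, `|g (x k)| ^+ 2 <= N k * - ip (g (x k)) (d k).
Hypothesis grad_neq0 : forall k, g (x k) != 0.

Lemma slope_gt0 k : 0 < - ip (g (x k)) (d k).
Proof.
rewrite -(pmulr_rgt0 _ (N_gt0 k)); apply: lt_le_trans (grad_sqr_le k).
by rewrite exprn_gt0 ?normr_gt0.
Qed.

Lemma J_decrease k : alpha k * sigma * - ip (g (x k)) (d k) <= J (x k) - J (x k.+1).
Proof. by have := armijo_step k; rewrite /armijo -x_step; lra. Qed.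

Lemma J_nonincreasing : nonincreasing_seq (fun n => J (x n)).
Proof.
apply/nonincreasing_seqP => k; rewrite -subr_ge0; apply: le_trans (J_decrease k).
by rewrite mulr_ge0 ?mulr_ge0 ?ltW ?slope_gt0.
Qed.

Section LinearConvergence.
Variables (mu amin MB MI : R) (kbar : nat).
Hypotheses (J_cont : continuous J) (g_cont : continuous g).
Hypothesis J_lb : exists lb, forall z, lb <= J z.
Hypotheses (mu_gt0 : 0 < mu) (amin_gt0 : 0 < amin).
Hypothesis alpha_ge : forall k, amin <= alpha k.
Hypothesis N_le : forall k, N k <= MB.
Hypotheses (MI_ge0 : 0 <= MI) (d_le : forall k, `|d k| <= MI * `|g (x k)|).

Local Notation Jstar := (limn (fun n => J (x n))).
Hypothesis error_bound :
  forall k, (kbar <= k)%N -> J (x k) - Jstar <= mu^-1 * `|g (x k)| ^+ 2.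

Let MB_gt0 : 0 < MB. Proof. exact: lt_le_trans (N_gt0 0) (N_le 0). Qed.
Let MB_sigma_amin_ge0 : 0 <= MB / (sigma * amin).
Proof. by rewrite ltW // divr_gt0 ?mulr_gt0. Qed.

Lemma J_cvgn : cvgn (fun n => J (x n)).
Proof.
apply: nonincreasing_is_cvgn J_nonincreasing _.
by have [lb J_ge] := J_lb; exists lb => _ [n _ <-].
Qed.

Lemma Jstar_le k : Jstar <= J (x k).
Proof. exact: nonincreasing_cvgn_ge J_nonincreasing J_cvgn k. Qed.

Lemma decrease_le_gap k : alpha k * sigma * - ip (g (x k)) (d k) <= J (x k) - Jstar.
Proof. by have := J_decrease k; have := Jstar_le k.+1; lra. Qed.

Lemma gap_contraction k : (kbar <= k)%N ->
  J (x k.+1) - Jstar <= (1 - sigma * alpha k * mu / N k) * (J (x k) - Jstar).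
Proof.
move=> kbar_k; pose c := - ip (g (x k)) (d k); set gap := J (x k) - Jstar.
have as_ge0 : 0 <= alpha k * sigma by rewrite mulr_ge0 // ltW.
have a_ge0 : 0 <= alpha k * sigma / N k by rewrite divr_ge0 // ltW.
have mu_gap : mu * gap <= `|g (x k)| ^+ 2.
  by have := error_bound kbar_k; rewrite ler_pdivlMl.
have G_c : alpha k * sigma / N k * `|g (x k)| ^+ 2 <= alpha k * sigma * c.
  by rewrite -mulrA ler_wpM2l // ler_pdivrMl.
have -> : (1 - sigma * alpha k * mu / N k) * gap
    = gap - alpha k * sigma / N k * (mu * gap) by field; rewrite gt_eqF.
have := ler_wpM2l a_ge0 mu_gap; have := J_decrease k; rewrite /gap -/c; lra.
Qed.

Lemma contraction_factor_le k :
  1 - sigma * alpha k * mu / N k <= 1 - sigma * amin * mu / MB.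
Proof.
rewrite lerD2l lerN2; apply: ler_pM.
- by rewrite !mulr_ge0 // ltW.
- by rewrite invr_ge0 ltW.
- by rewrite ler_pM2r // ler_pM2l.
- by rewrite lef_pV2 ?posrE.
Qed.

Lemma grad_sqr_le_gap k : `|g (x k)| ^+ 2 <= MB / (sigma * amin) * (J (x k) - Jstar).
Proof.
have c_gt0 := slope_gt0 k; set c := - ip _ _ in c_gt0 *.
apply: le_trans (grad_sqr_le k) _; apply: le_trans (_ : MB * c <= _).
  by rewrite ler_pM2r.
rewrite mulrAC ler_pdivlMr ?mulr_gt0 // -mulrA ler_pM2l //.
apply: le_trans _ (decrease_le_gap k).
by rewrite mulrC ler_pM2r // mulrC ler_pM2r.
Qed.

Lemma step_le k : (kbar <= k)%N ->
  `|x k.+1 - x k| <= MB / (sigma * mu) * MI * `|g (x k)|.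
Proof.
move=> kbar_k; have c_gt0 := slope_gt0 k; set c := - ip _ _ in c_gt0 *.
have alpha_le : alpha k <= MB / (sigma * mu).
  rewrite ler_pdivlMr ?mulr_gt0 // -(ler_pM2r c_gt0).
  have -> : alpha k * (sigma * mu) * c = mu * (alpha k * sigma * c) by ring.
  apply: le_trans (_ : mu * (J (x k) - Jstar) <= _).
    by rewrite ler_pM2l // decrease_le_gap.
  have := error_bound kbar_k; rewrite ler_pdivlMl // => /le_trans; apply.
  by apply: le_trans (grad_sqr_le k) _; rewrite ler_pM2r.
rewrite x_step addrAC subrr add0r normrZ gtr0_norm // -mulrA.
exact: ler_pM (ltW (alpha_gt0 k)) (normr_ge0 _) alpha_le (d_le k).
Qed.

Let qc := 1 - sigma * amin * mu / MB.
(* Kept away from [0] so that [Num.sqrt q] is a positive rate. *)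
Let q := Num.max 2^-1 qc.

Let qc_lt1 : qc < 1.
Proof. by rewrite /qc gtrDl oppr_lt0 !mulr_gt0 ?invr_gt0. Qed.

Let q_gt0 : 0 < q. Proof. by rewrite lt_max invr_gt0 ltr0n. Qed.
Let q_lt1 : q < 1. Proof. by rewrite gt_max qc_lt1 invf_lt1 ?ltr1n. Qed.
Let r_gt0 : 0 < Num.sqrt q. Proof. by rewrite sqrtr_gt0. Qed.
Let r_lt1 : Num.sqrt q < 1. Proof. by rewrite -sqrtr1 ltr_sqrt. Qed.

Lemma gap_qlinear k : (kbar <= k)%N -> J (x k.+1) - Jstar <= q * (J (x k) - Jstar).
Proof.
move=> kbar_k; apply: le_trans (gap_contraction kbar_k) _.
rewrite ler_wpM2r ?subr_ge0 ?Jstar_le //.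
by apply: le_trans (contraction_factor_le k) _; rewrite le_max lexx orbT.
Qed.

Lemma grad_geometric : exists2 C, 0 <= C & forall k, `|g (x k)| <= C * Num.sqrt q ^+ k.
Proof.
pose A := MB / (sigma * amin) * ((J (x kbar) - Jstar) / q ^+ kbar).
apply: (geometric_bound_from (C := Num.sqrt A) (K := kbar) r_gt0) => k kbar_k.
rewrite -[X in X <= _]ger0_norm // -(ger0_norm (exprn_ge0 _ (ltW r_gt0))).
apply: norm_le_sqrt_mul; rewrite -exprM mulnC exprM sqr_sqrtr ?(ltW q_gt0) // -mulrA.
apply: le_trans (grad_sqr_le_gap k) _; rewrite ler_wpM2l //.
exact: (geometric_of_contraction (e := fun n => J (x n) - Jstar) q_gt0 gap_qlinear kbar_k).
Qed.

Lemma step_geometric :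
  exists2 C, 0 <= C & forall k, `|x k.+1 - x k| <= C * Num.sqrt q ^+ k.
Proof.
have [Cg _ g_le] := grad_geometric.
have K_ge0 : 0 <= MB / (sigma * mu) * MI.
  by rewrite mulr_ge0 // ltW // divr_gt0 ?mulr_gt0.
apply: (geometric_bound_from (C := MB / (sigma * mu) * MI * Cg) (K := kbar) r_gt0).
by move=> k /step_le /le_trans; apply; rewrite -[leRHS]mulrA ler_wpM2l.
Qed.

Theorem linear_convergence : exists xs : X,
  [/\ g xs = 0 /\ Jstar = J xs,
      rlinear_conv x xs,
      rlinear_conv (fun k => g (x k)) 0 &
      [/\ qlinear_conv (fun k => J (x k)) (J xs),
          forall k, (kbar <= k)%N ->
            J (x k.+1) - J xs <= (1 - sigma * alpha k * mu / N k) * (J (x k) - J xs) &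
          exists2 q : R, q < 1 &
            forall k, (kbar <= k)%N -> 1 - sigma * alpha k * mu / N k <= q]].
Proof.
have r01 : 0 < Num.sqrt q < 1 by rewrite r_gt0 r_lt1.
have [Cx _ x_steps] := step_geometric.
have [xs x_conv] := rlinear_conv_of_geometric_steps r01 x_steps.
have [Cg Cg_ge0 g_le] := grad_geometric.
have g_conv : rlinear_conv (fun k => g (x k)) 0.
  by exists Cg, (Num.sqrt q); split=> [//||//|k]; rewrite ?sqrtr_ge0 ?subr0.
have x_cvg := rlinear_conv_cvg x_conv.
have gxs : g xs = 0.
  exact: cvg_unique _ (cvg_comp _ _ x_cvg (@g_cont xs)) (rlinear_conv_cvg g_conv).
have Jxs : Jstar = J xs by exact: cvg_lim _ (cvg_comp _ _ x_cvg (@J_cont xs)).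
exists xs; rewrite -Jxs; split=> //; split.
- exists q; split; first exact: ltW.
  split=> //; exists kbar => k kbar_k.
  by rewrite !ger0_norm ?subr_ge0 ?Jstar_le //; exact: gap_qlinear.
- exact: gap_contraction.
- by exists qc => // k _; exact: contraction_factor_le.
Qed.

End LinearConvergence.

End Descent.

Lemma le_clamp (R : realType) (wl : R) (wu : option R) (t : R) :
  (if wu is Some u then wl <= u else true) -> wl <= clamp wl wu t.
Proof. by case: wu => [u|] /= wl_u; rewrite ?le_min le_max lexx orbT ?wl_u. Qed.

Section SLBFGSRun.
Variables (R : realType) (X : completeNormedModType R)
  (ip : X -> X -> R) (J : X -> R) (g : X -> X)
  (ell : nat) (c0 : R) (C0 : option R) (cs c1 c2 : R)
  (armijo_ls : bool) (beta sigma eta : R) (tau_g_variant : bool)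
  (x : nat -> X) (S : nat -> {linear X -> X}) (tau alpha : nat -> R)
  (B : nat -> X -> X) (d : nat -> X).
Hypothesis Hip : inner_product ip.
Hypothesis run : slbfgs_run ip J g ell c0 C0 cs c1 c2 armijo_ls beta sigma eta
  tau_g_variant x S tau alpha B d.

Let B_dir k : B k (d k) = - g (x k).
Proof. by case: run => _ [_ [_ [_ [+ _]]]]. Qed.

Let grad_succ_neq0 k : g (x k.+1) != 0.
Proof. by case: run => _ [_ [_ [_ [_ [_ [_ [+ _]]]]]]]. Qed.

Lemma slbfgs_x_step k : x k.+1 = x k + alpha k *: d k.
Proof. by case: run => _ [_ [_ [_ [_ [_ [+ _]]]]]]. Qed.

Lemma slbfgs_alpha_gt0 k : 0 < alpha k.
Proof. by case: run => _ [_ [_ [_ [_ [+ _]]]]] => /(_ k) []. Qed.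

Lemma slbfgs_sigma01 : 0 < sigma < 1.
Proof.
case: run => _ [+ _]; case: armijo_ls => [[_ //]|[/andP[sigma_gt0 sigma_lt_eta] eta_lt1]].
by rewrite sigma_gt0 (lt_trans sigma_lt_eta).
Qed.

Lemma slbfgs_armijo k : armijo ip J g sigma (x k) (d k) (alpha k).
Proof.
case: run => _ [_ [_ [_ [_ [/(_ k) [_] + _]]]]].
by case: armijo_ls => [[i [_ []]] | []].
Qed.

Lemma slbfgs_tau_ge0 k : 0 <= tau k.
Proof.
case: run => [[[c0_ge0 C0_ge_c0] [[_ [c1_gt0 _]] tau0_gt0]] [_ [_ [_ [_ [_ [_ [_ tau_rule]]]]]]]].
case: k => [|k]; first exact: ltW.
have wl_ge0 : 0 <= Num.min c0 (c1 * `|g (x k.+1)| `^ c2).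
  by rewrite le_min c0_ge0 mulr_ge0 ?powR_ge0 ?ltW.
move: (tau_rule k) => /=; case: ifP => _ /andP[+ _]; apply: le_trans;
  apply: le_trans wl_ge0 (le_clamp _ _);
  by case: C0 C0_ge_c0 => [C|] //= c0_C; rewrite le_max ge_min c0_C.
Qed.

Lemma slbfgs_B_linear_symmetric_psd k : linear (B k) /\ symmetric_psd ip (B k).
Proof.
case: run => [[_ [[cs_gt0 _] _]] [_ [S_psd [B_def _]]]]; rewrite B_def.
have [symS psdS] := S_psd k.
apply: foldl_bfgs_update_symmetric_psd => //.
- move=> a u v /=; rewrite linearP !scalerDr !scalerA [tau k * a]mulrC.
  by rewrite addrACA.
- split=> [u v|u] /=; rewrite (ipDl Hip) (ipZl Hip).
    by rewrite (ipDr Hip) (ipZr Hip) symS.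
  by rewrite addr_ge0 ?mulr_ge0 ?slbfgs_tau_ge0 // (ipxx Hip) sqr_ge0.
- rewrite all_map; apply/allP => j; rewrite mem_filter => /andP[stored _] /=.
  apply: ltW; apply: le_lt_trans stored.
  by rewrite mulr_ge0 ?sqr_ge0 // ltW.
Qed.

Let B_linear k := (slbfgs_B_linear_symmetric_psd k).1.

Hypotheses (B_bounded : unif_bounded_ops B) (B_inv_bounded : unif_bounded_inverses B).

Lemma slbfgs_grad_neq0 k : g (x k) != 0.
Proof.
case: k => [|k]; last exact: grad_succ_neq0.
apply: contraNneq (grad_succ_neq0 0) => g0; have [M B_inv] := B_inv_bounded.
have d0 : d 0 = 0.
  apply/eqP; rewrite -normr_le0; apply: le_trans ((B_inv 0).2 _) _.
  by rewrite B_dir g0 oppr0 normr0 mulr0.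
by rewrite slbfgs_x_step d0 scaler0 addr0 g0.
Qed.

Lemma slbfgs_opnorm_gt0 k : 0 < opnorm (B k).
Proof.
have [M B_M] := B_bounded.
have := opnorm_ub (B_M k) (- d k) (B_linear k).
rewrite linear_funN ?B_linear // B_dir opprK => ub.
have : 0 < `|g (x k)| by rewrite normr_gt0 slbfgs_grad_neq0.
by move: (normr_ge0 (- d k)); nra.
Qed.

Lemma slbfgs_grad_sqr_le k :
  `|g (x k)| ^+ 2 <= opnorm (B k) * - ip (g (x k)) (d k).
Proof.
have [M B_M] := B_bounded; have [linB symB] := slbfgs_B_linear_symmetric_psd k.
have := sqr_norm_le_ip Hip (- d k) linB symB (ltW (slbfgs_opnorm_gt0 k))
  (fun w => opnorm_ub (B_M k) w linB).
by rewrite linear_funN // B_dir opprK (ipNr Hip).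
Qed.

Lemma slbfgs_dir_bounded : exists2 MI, 0 <= MI & forall k, `|d k| <= MI * `|g (x k)|.
Proof.
have [M B_inv] := B_inv_bounded; exists `|M| => // k.
by apply: le_trans ((B_inv k).2 (d k)) _; rewrite B_dir normrN ler_wpM2r // ler_norm.
Qed.

Variables (MB MI L : R).
Hypothesis opnorm_le_MB : forall k, opnorm (B k) <= MB.
Hypotheses (MI_ge0 : 0 <= MI) (d_le : forall k, `|d k| <= MI * `|g (x k)|).

Let slope_lt0 k : ip (g (x k)) (d k) < 0.
Proof.
by rewrite -oppr_gt0 (slope_gt0 slbfgs_opnorm_gt0 slbfgs_grad_sqr_le slbfgs_grad_neq0).
Qed.

Lemma slbfgs_iterates_in_levelset k : levelset J (x 0) (x k).
Proof.
have /andP[sigma_gt0 _] := slbfgs_sigma01.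
exact: (J_nonincreasing sigma_gt0 slbfgs_alpha_gt0 slbfgs_opnorm_gt0 slbfgs_x_step
  slbfgs_armijo slbfgs_grad_sqr_le slbfgs_grad_neq0 (leq0n k)).
Qed.

Lemma slbfgs_dir_sqr_le k : `|d k| ^+ 2 <= MI ^+ 2 * MB * - ip (g (x k)) (d k).
Proof.
apply: le_trans (_ : (MI * `|g (x k)|) ^+ 2 <= _).
  by rewrite lerXn2r ?nnegrE ?mulr_ge0.
rewrite exprMn -mulrA ler_wpM2l ?sqr_ge0 //; apply: le_trans (slbfgs_grad_sqr_le k) _.
by rewrite ler_wpM2r // oppr_ge0 ltW ?slope_lt0.
Qed.

Hypothesis J_grad : forall p, differentiable J p /\ forall h, ('d J p : X -> R) h = ip (g p) h.
Hypotheses (L_gt0 : 0 < L) (g_lip : grad_lipschitz_on (levelset J (x 0)) g L).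

Lemma slbfgs_step_lb : exists2 amin, 0 < amin & forall k, amin <= alpha k.
Proof.
set K := MI ^+ 2 * MB.
have LK_gt0 : 0 < L * K.
  have d0_gt0 : 0 < `|d 0|.
    rewrite normr_gt0; apply: contra (slbfgs_grad_neq0 0) => /eqP d0.
    by rewrite -oppr_eq0 -B_dir d0 linear_fun0 ?B_linear.
  have MI_gt0 : 0 < MI.
    move: (d_le 0); rewrite lt_def MI_ge0 andbT; apply: contraTneq => ->.
    by rewrite mul0r -ltNge.
  by rewrite !mulr_gt0 ?exprn_gt0 // (lt_le_trans (slbfgs_opnorm_gt0 0)).
have lb_levelset k y : J y <= J (x k) -> levelset J (x 0) y.
  by move=> Jy; apply: le_trans Jy (slbfgs_iterates_in_levelset k).
case: run => _ [+ [_ [_ [_ [+ _]]]]].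
case: armijo_ls => [[/andP[beta_gt0 _] sigma01] | [_ eta_lt1]] alpha_ls.
- exists (Num.min 1 (beta * (1 - sigma) / (L * K))) => [|k].
    by rewrite lt_min ltr01 divr_gt0 // mulr_gt0 // subr_gt0; case/andP: sigma01.
  have [_ bt] := alpha_ls k.
  have [->|lb] := armijo_backtracking_step_lb Hip J_grad (ltW L_gt0) g_lip beta_gt0
    sigma01 bt (lb_levelset k) (slope_lt0 k) (slbfgs_dir_sqr_le k).
    by rewrite ge_min lexx.
  by rewrite ge_min ler_pdivrMr // [alpha k * _]mulrC lb orbT.
- exists ((1 - eta) / (L * K)) => [|k]; first by rewrite divr_gt0 // subr_gt0.
  have [alpha_gt0 wp] := alpha_ls k.
  rewrite ler_pdivrMr // mulrC.
  apply: (wolfe_powell_step_lb Hip (ltW L_gt0) g_lip wp (ltW alpha_gt0)).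
  - exact: slbfgs_iterates_in_levelset.
  - by rewrite -slbfgs_x_step; exact: slbfgs_iterates_in_levelset.
  - exact: (slope_lt0 k).
  - exact: slbfgs_dir_sqr_le.
Qed.

End SLBFGSRun.

Theorem theorem4p12 (R : realType) (X : completeNormedModType R)
    (ip : X -> X -> R) (J : X -> R) (g : X -> X)
    (ell : nat) (c0 : R) (C0 : option R) (cs c1 c2 : R)
    (armijo_ls : bool) (beta sigma eta : R) (tau_g_variant : bool)
    (x : nat -> X) (S : nat -> {linear X -> X}) (tau alpha : nat -> R)
    (B : nat -> X -> X) (d : nat -> X) (L : R) (kbar : nat) (mu : R) :
  (* X is a (real) Hilbert space with inner product ip *)
  inner_product ip ->
  (* (x_k) is an infinite run of SLBFGS (epsilon = 0), assumption 7 *)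
  slbfgs_run ip J g ell c0 C0 cs c1 c2 armijo_ls beta sigma eta tau_g_variant
    x S tau alpha B d ->
  (* 1) *)
  C1_with_gradient ip J g ->
  (exists lb : R, forall z, lb <= J z) ->
  (* 2) *)
  0 < L -> grad_lipschitz_on (levelset J (x 0)) g L ->
  (* 3) *)
  unif_bounded_ops (fun k => (S k : X -> X)) ->
  (* 4) *)
  (armijo_ls -> exists2 delta : R, 0 < delta &
     unif_continuous_on (levelset_nbhd J (x 0) delta) J \/
     unif_continuous_on (levelset_nbhd J (x 0) delta) g) ->
  (* 5) *)
  (c0 = 0 -> unif_bounded_inverses (fun k v => tau k *: v + S k v)) ->
  (* 6) *)
  (C0 = None -> tau_g_variant \/
     (C2_gradient g /\ avg_hessian_cond ip g S x alpha d)) ->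
  (tau_g_variant -> C0 = None) ->
  (* 8) *)
  unif_bounded_ops B -> unif_bounded_inverses B ->
  (* 9) *)
  (armijo_ls -> exists2 delta : R, 0 < delta &
     unif_continuous_on (levelset_nbhd J (x 0) delta) J \/
     exists L' : R, grad_lipschitz_on (levelset_nbhd J (x 0) delta) g L') ->
  (* error bound *)
  0 < mu ->
  (forall k, (kbar <= k)%N ->
     J (x k) - limn (fun n => J (x n)) <= mu^-1 * `|g (x k)| ^+ 2) ->
  exists xs : X,
    [/\ g xs = 0 /\ limn (fun n => J (x n)) = J xs,
        rlinear_conv x xs,
        rlinear_conv (fun k => g (x k)) 0 &
        [/\ qlinear_conv (fun k => J (x k)) (J xs),
            forall k, (kbar <= k)%N ->
              J (x k.+1) - J xs
                <= (1 - sigma * alpha k * mu / opnorm (B k)) * (J (x k) - J xs) &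
            exists2 q : R, q < 1 &
              forall k, (kbar <= k)%N ->
                1 - sigma * alpha k * mu / opnorm (B k) <= q]].
Proof.
move=> Hip run [J_grad g_cont] J_lb L_gt0 g_lip _ _ _ _ _ B_bounded B_inv_bounded _
  mu_gt0 error_bound.
have /andP[sigma_gt0 _] := slbfgs_sigma01 run.
have [MB opnorm_le_MB] := opnorm_unif_bounded B_bounded.
have [MI MI_ge0 d_le] := slbfgs_dir_bounded run B_inv_bounded.
have [amin amin_gt0 alpha_ge] :=
  slbfgs_step_lb Hip run B_bounded B_inv_bounded opnorm_le_MB MI_ge0 d_le J_grad L_gt0 g_lip.
have J_cont : continuous J := fun p => differentiable_continuous (J_grad p).1.
exact: (linear_convergence sigma_gt0 (slbfgs_alpha_gt0 run)
  (slbfgs_opnorm_gt0 Hip run B_bounded B_inv_bounded) (slbfgs_x_step run)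
  (slbfgs_armijo run) (slbfgs_grad_sqr_le Hip run B_bounded B_inv_bounded)
  (slbfgs_grad_neq0 run B_inv_bounded) J_cont g_cont J_lb mu_gt0 amin_gt0 alpha_ge
  opnorm_le_MB MI_ge0 d_le error_bound).
Qed.
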